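(* Every equidistributed infinite permutation is aperiodic, i.e. not ultimately periodic.
   Context: An infinite permutation is an equivalence class of sequences $(a[n])_{n\ge0}$ of pairwise distinct reals, where two sequences are equivalent if $a[i]<a[j]\iff b[i]<b[j]$ for all $i,j$; write $\alpha=(\alpha[n])_{n\ge0}$ with the induced order. A sequence $(a[n])$ in $[0,1]$ is equidistributed if $\lim_{n\to\infty}\frac{\#\{0\le i<n:a[i]<t\}}{n}=t$ for each $t\in[0,1]$; a permutation is equidistributed if it has an equidistributed representative in $[0,1]$. A permutation $\alpha$ is ultimately $t$-periodic ($t\ge1$) if for all sufficiently large $i,j$, $\alpha[i]<\alpha[j]\iff\alpha[i+t]<\alpha[j+t]$; it is ultimately periodic if it is ultimately $t$-periodic for some $t$. *)

From Stdlib Require Import Reals.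
Open Scope R_scope.

(* A sequence of pairwise distinct reals (a representative of an infinite permutation). *)
Definition distinct_seq (a : nat -> R) : Prop :=
  forall i j : nat, i <> j -> a i <> a j.

(* Two sequences represent the same infinite permutation. *)
Definition order_equiv (a b : nat -> R) : Prop :=
  forall i j : nat, a i < a j <-> b i < b j.

Fixpoint count_below (b : nat -> R) (t : R) (n : nat) : nat :=
  match n with
  | O => O
  | S m => (if Rlt_dec (b m) t then 1 else 0) + count_below b t m
  end%nat.

Definition equidistributed_seq (b : nat -> R) : Prop :=
  (forall n, 0 <= b n <= 1) /\
  forall t : R, 0 <= t <= 1 ->
    Un_cv (fun n => INR (count_below b t n) / INR n) t.

Definition equidistributed_perm (a : nat -> R) : Prop :=
  exists b : nat -> R, distinct_seq b /\ order_equiv a b /\ equidistributed_seq b.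

Definition ult_t_periodic (a : nat -> R) (t : nat) : Prop :=
  exists N : nat, forall i j : nat, (N <= i)%nat -> (N <= j)%nat ->
    (a i < a j <-> a (i + t)%nat < a (j + t)%nat).

Definition ult_periodic (a : nat -> R) : Prop :=
  exists t : nat, (1 <= t)%nat /\ ult_t_periodic a t.

From Stdlib Require Import Reals Lra Lia Classical.
Open Scope R_scope.

(* If the representative b is ultimately t-periodic, then along each residue
   class mod t the subsequence k |-> b (i + k t) is strictly monotone, since the
   comparison of b i with b (i + t) propagates.  Hence for a threshold s every
   class is eventually entirely below or entirely above s, and the proportion of
   indices with b n < s tends to m / t, where m counts the classes ending below
   s.  Equidistribution forces m / t = s, which fails for s = 1 / (2 t). *)

Lemma count_below_ext (b c : nat -> R) (s : R) (n : nat) :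
  (forall i, (i < n)%nat -> (b i < s <-> c i < s)) ->
  count_below b s n = count_below c s n.
Proof.
  induction n as [|n IH]; intros Hbc; simpl; [reflexivity|].
  rewrite IH by (intros i Hi; apply Hbc; lia).
  destruct (Rlt_dec (b n) s) as [Hb|Hb], (Rlt_dec (c n) s) as [Hc|Hc];
    try reflexivity; exfalso.
  - apply Hc, (Hbc n); auto.
  - apply Hb, (Hbc n); auto.
Qed.

Lemma count_below_add (b : nat -> R) (s : R) (m n : nat) :
  count_below b s (m + n) =
  (count_below b s m + count_below (fun i => b (m + i)%nat) s n)%nat.
Proof.
  induction n as [|n IH]; simpl.
  - now rewrite Nat.add_0_r.
  - rewrite Nat.add_succ_r; simpl; rewrite IH; lia.
Qed.

Lemma count_below_periodic (b : nat -> R) (s : R) (N t : nat) :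
  (forall i, (N <= i)%nat -> (b (i + t)%nat < s <-> b i < s)) ->
  forall k, count_below b s (N + k * t) =
    (count_below b s N + k * count_below (fun i => b (N + i)%nat) s t)%nat.
Proof.
  intros Hper.
  assert (Hiter : forall k i, (b (N + k * t + i)%nat < s <-> b (N + i)%nat < s)).
  { induction k as [|k IH]; intros i.
    - now rewrite Nat.add_0_r.
    - replace (N + S k * t + i)%nat with (N + k * t + i + t)%nat by lia.
      rewrite Hper by lia; apply IH. }
  induction k as [|k IH].
  - simpl; rewrite Nat.add_0_r; lia.
  - replace (N + S k * t)%nat with (N + k * t + t)%nat by lia.
    rewrite count_below_add, IH.
    rewrite (count_below_ext (fun i => b (N + k * t + i)%nat) (fun i => b (N + i)%nat) s t)
      by (intros i _; apply Hiter).
    lia.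
Qed.

Lemma monotone_of_step_order (f : nat -> R) :
  (forall k, f k <> f (S k)) ->
  (forall k, f k < f (S k) <-> f (S k) < f (S (S k))) ->
  (forall k, f k < f (S k)) \/ (forall k, f (S k) < f k).
Proof.
  intros Hne Hstep.
  destruct (Rtotal_order (f 0%nat) (f 1%nat)) as [H0|[H0|H0]].
  - left; induction k as [|k IH]; [exact H0|]; now apply (Hstep k).
  - now destruct (Hne 0%nat).
  - right; induction k as [|k IH]; [exact H0|].
    destruct (Rtotal_order (f (S (S k))) (f (S k))) as [H|[H|H]]; [exact H| |].
    + now destruct (Hne (S k)).
    + apply (Hstep k) in H; lra.
Qed.

Lemma monotone_eventually_same_side (f : nat -> R) (s : R) :
  (forall k, f k < f (S k)) \/ (forall k, f (S k) < f k) ->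
  exists M, forall k, (M <= k)%nat -> (f (S k) < s <-> f k < s).
Proof.
  intros [Hinc|Hdec].
  - destruct (classic (exists k0, s <= f k0)) as [[k0 Hk0]|Hbelow].
    + exists k0; intros k Hk.
      assert (Hgrow : Un_growing f) by (intro n; apply Rlt_le, Hinc).
      pose proof (growing_prop f k k0 Hgrow Hk); pose proof (Hinc k); lra.
    + exists 0%nat; intros k _.
      split; intros _; apply Rnot_le_lt; intro; apply Hbelow; eauto.
  - destruct (classic (exists k0, f k0 < s)) as [[k0 Hk0]|Habove].
    + exists k0; intros k Hk.
      assert (Hdecr : Un_decreasing f) by (intro n; apply Rlt_le, Hdec).
      pose proof (decreasing_prop f k0 k Hdecr Hk); pose proof (Hdec k); lra.
    + exists 0%nat; intros k _.
      split; intros Hlt; exfalso; apply Habove; eauto.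
Qed.

Lemma exists_uniform_bound (P : nat -> nat -> Prop) (c : nat) :
  (forall j M M', (M <= M')%nat -> P j M -> P j M') ->
  (forall j, (j < c)%nat -> exists M, P j M) ->
  exists M, forall j, (j < c)%nat -> P j M.
Proof.
  intros Hmono; induction c as [|c IH]; intros Hex.
  - exists 0%nat; intros; lia.
  - destruct IH as [M1 HM1]; [intros j Hj; apply Hex; lia|].
    destruct (Hex c) as [M2 HM2]; [lia|].
    exists (Nat.max M1 M2); intros j Hj.
    destruct (Nat.eq_dec j c) as [->|Hjc].
    + apply (Hmono c M2); [lia|exact HM2].
    + apply (Hmono j M1); [lia|apply HM1; lia].
Qed.

Lemma ult_t_periodic_order_equiv (a b : nat -> R) (t : nat) :
  order_equiv a b -> ult_t_periodic a t -> ult_t_periodic b t.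
Proof.
  intros Hab [N HN]; exists N; intros i j Hi Hj.
  rewrite <- (Hab i j), <- (Hab (i + t)%nat (j + t)%nat); auto.
Qed.

Lemma ult_periodic_class_monotone (b : nat -> R) (t N : nat) :
  distinct_seq b -> (1 <= t)%nat ->
  (forall i j, (N <= i)%nat -> (N <= j)%nat ->
     (b i < b j <-> b (i + t)%nat < b (j + t)%nat)) ->
  forall i, (N <= i)%nat ->
  let f := fun k => b (i + k * t)%nat in
  (forall k, f k < f (S k)) \/ (forall k, f (S k) < f k).
Proof.
  intros Hdist Ht Hper i Hi f.
  assert (Hsucc : forall k, (i + S k * t = i + k * t + t)%nat) by (intro k; lia).
  apply monotone_of_step_order; intro k; unfold f.
  - apply Hdist; nia.
  - rewrite !Hsucc, Hper; [reflexivity | lia | lia].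
Qed.

Lemma ult_periodic_threshold_periodic (b : nat -> R) (t : nat) (s : R) :
  distinct_seq b -> (1 <= t)%nat -> ult_t_periodic b t ->
  exists N, forall i, (N <= i)%nat -> (b (i + t)%nat < s <-> b i < s).
Proof.
  intros Hdist Ht [N Hper].
  destruct (exists_uniform_bound
              (fun j M => forall k, (M <= k)%nat ->
                 (b (N + j + S k * t)%nat < s <-> b (N + j + k * t)%nat < s)) t)
    as [M HM].
  { intros j M M' HMM' H k Hk; apply H; lia. }
  { intros j _; apply (monotone_eventually_same_side (fun k => b (N + j + k * t)%nat)).
    apply (ult_periodic_class_monotone b t N); auto; lia. }
  exists (N + M * t)%nat; intros i Hi.
  assert (Ht0 : t <> 0%nat) by lia.
  set (j := ((i - N) mod t)%nat); set (k := ((i - N) / t)%nat).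
  assert (Hi_eq : i = (N + j + k * t)%nat).
  { pose proof (Nat.div_mod (i - N) t Ht0); unfold j, k; lia. }
  assert (Hk : (M <= k)%nat).
  { unfold k; rewrite <- (Nat.div_mul M t Ht0); apply Nat.Div0.div_le_mono; lia. }
  rewrite Hi_eq; replace (N + j + k * t + t)%nat with (N + j + S k * t)%nat by lia.
  apply HM; [apply Nat.mod_upper_bound; exact Ht0 | exact Hk].
Qed.

Lemma Un_cv_subseq (u : nat -> R) (l : R) (phi : nat -> nat) :
  (forall k, (k <= phi k)%nat) -> Un_cv u l -> Un_cv (fun k => u (phi k)) l.
Proof.
  intros Hphi Hu eps Heps.
  destruct (Hu eps Heps) as [K HK]; exists K; intros k Hk.
  apply HK; specialize (Hphi k); lia.
Qed.

Lemma Un_cv_affine_ratio (C m N t : nat) : (1 <= t)%nat ->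
  Un_cv (fun k => INR (C + k * m) / INR (N + k * t)) (INR m / INR t).
Proof.
  intros Ht.
  assert (Htr : 0 < INR t) by (apply lt_0_INR; lia).
  set (denom := fun k => INR (N + (k + 1) * t)).
  assert (Hden_ge : forall k, INR k <= denom k).
  { intro k; apply le_INR; nia. }
  assert (Hden_infty : cv_infty denom).
  { intro A; destruct (INR_unbounded A) as [n0 Hn0]; exists n0; intros k Hk.
    pose proof (le_INR _ _ Hk); pose proof (Hden_ge k); lra. }
  (* Shifting by one keeps the denominator positive even when N = 0. *)
  apply (CV_shift _ 1).
  apply (Un_cv_ext (fun k => INR m / INR t + (INR C - INR N * INR m / INR t) * / denom k)).
  { intro k; assert (Hpos : 0 < denom k) by (apply lt_0_INR; nia).
    unfold denom in *; rewrite !plus_INR, !mult_INR in *; field; lra. }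
  set (c := INR C - INR N * INR m / INR t).
  enough (Hlim : Un_cv (fun k => INR m / INR t + c * / denom k) (INR m / INR t + c * 0))
    by now rewrite Rmult_0_r, Rplus_0_r in Hlim.
  apply CV_plus.
  - intros eps Heps; exists 0%nat; intros; rewrite Rdist_eq; exact Heps.
  - apply CV_mult; [|now apply cv_infty_cv_0].
    intros eps Heps; exists 0%nat; intros; rewrite Rdist_eq; exact Heps.
Qed.

Theorem corollary1 (a : nat -> R) :
  distinct_seq a -> equidistributed_perm a -> ~ ult_periodic a.
Proof.
  intros _ [b [Hdist [Hab [Hunit Hfreq]]]] [t [Ht Hper]].
  apply (ult_t_periodic_order_equiv a b t Hab) in Hper.
  assert (Htr : 1 <= INR t) by (apply (le_INR 1); lia).
  (* No multiple of 1 / t lies strictly between 0 and 1 / t. *)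
  set (s := / (2 * INR t)).
  assert (Hs : 0 <= s <= 1).
  { unfold s; split; [apply Rlt_le, Rinv_0_lt_compat; lra|].
    rewrite <- Rinv_1; apply Rinv_le_contravar; lra. }
  destruct (ult_periodic_threshold_periodic b t s Hdist Ht Hper) as [N HN].
  set (m := count_below (fun i => b (N + i)%nat) s t).
  assert (Hcv : Un_cv (fun k => INR (count_below b s N + k * m) / INR (N + k * t)) s).
  { apply (Un_cv_ext (fun k => INR (count_below b s (N + k * t)) / INR (N + k * t))).
    { intro k; now rewrite (count_below_periodic b s N t HN k). }
    apply (Un_cv_subseq (fun n => INR (count_below b s n) / INR n)); [intro; nia|].
    now apply Hfreq. }
  assert (Hm : s = INR m / INR t)
    by exact (UL_sequence _ _ _ Hcv (Un_cv_affine_ratio _ m N t Ht)).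
  assert (H2m : INR (2 * m) = INR 1).
  { rewrite mult_INR; unfold s in Hm; simpl.
    apply (Rmult_eq_reg_r (/ (2 * INR t))); [|apply Rinv_neq_0_compat; lra].
    rewrite Hm at 2; field; lra. }
  apply INR_eq in H2m; lia.
Qed.
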